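(* Let $r=r(n)\ge 2$ with $r=o(n^{1/2})$. Then $\Pr(\mathcal C\mid\mathcal A_2)=o(1)$ as $n\to\infty$, where $\mathcal C$ is the event that a third edge $e_3$ is chosen, $e_3\supseteq e_1\cap e_2$, and $e_3$ contains at least one vertex of $(e_1\setminus e_2)\cup(e_2\setminus e_1)$.
   Context: Random intersecting process: Let $[n]=\{1,\dots,n\}$ and $\binom{[n]}{r}$ the family of $r$-subsets of $[n]$. Choose $e_1$ uniformly at random from $\binom{[n]}{r}$. Given $\mathcal F_i=\{e_1,\dots,e_i\}$, let $\mathcal A(\mathcal F_i)=\{e\in\binom{[n]}{r}: e\notin\mathcal F_i,\ e\cap e_j\neq\emptyset \text{ for all } 1\le j\le i\}$, and choose $e_{i+1}$ uniformly at random from $\mathcal A(\mathcal F_i)$. The process halts when $\mathcal A(\mathcal F_i)=\emptyset$. $\mathcal A_2$ is the event that at least two edges are chosen and $|e_1\cap e_2|=1$. *)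

From HB Require Import structures.
From mathcomp Require Import all_boot all_order all_algebra.
Unset Printing Implicit Defensive.
Import Order.TTheory GRing.Theory Num.Theory.
Local Open Scope ring_scope.

(* A(F): r-subsets of [n] (modelled as 'I_n) not in F meeting every edge of F.
   For F = [::] this is all r-subsets, the law of e_1. *)
Definition adm (n r : nat) (F : seq {set 'I_n}) : {set {set 'I_n}} :=
  [set e : {set 'I_n} | [&& #|e| == r, e \notin F & all (fun f => e :&: f != set0) F]].

Definition pstep (n r : nat) (F : seq {set 'I_n}) : rat := (#|adm n r F|%:R)^-1.

Definition PrA2 (n r : nat) : rat :=
  \sum_(e1 in adm n r [::])
    \sum_(e2 in adm n r [:: e1] | #|e1 :&: e2| == 1%N)
      pstep n r [::] * pstep n r [:: e1].

Definition eventC {n : nat} (e1 e2 e3 : {set 'I_n}) : bool :=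
  (e1 :&: e2 \subset e3) && (e3 :&: ((e1 :\: e2) :|: (e2 :\: e1)) != set0).

Definition PrCA2 (n r : nat) : rat :=
  \sum_(e1 in adm n r [::])
    \sum_(e2 in adm n r [:: e1] | #|e1 :&: e2| == 1%N)
      \sum_(e3 in adm n r [:: e1; e2] | eventC e1 e2 e3)
        pstep n r [::] * pstep n r [:: e1] * pstep n r [:: e1; e2].

Definition PrC_given_A2 (n r : nat) : rat := PrCA2 n r / PrA2 n r.

From HB Require Import structures.
From mathcomp Require Import all_boot all_order all_algebra.
From mathcomp Require Import zify lra.
Import Order.TTheory GRing.Theory Num.Theory.

(* Given A_2 with e1 :&: e2 = {v}, every r-set through v other than e1, e2 is
   admissible as e3, so there are at least C(n-1, r-1) - 2 choices.  An e3 in C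
   contains v and one of the 2(r-1) vertices of the symmetric difference, so
   there are at most 2(r-1) C(n-2, r-2) = 2(r-1)^2 C(n-1, r-1) / (n-1) of them.
   The conditional probability of C is thus O(r^2/n) for every such pair, and
   Pr(C | A_2) is an average of these. *)

Lemma leq_card_bigcup (T I : finType) (D : {pred I}) (F : I -> {set T}) :
  (#|\bigcup_(i in D) F i| <= \sum_(i in D) #|F i|)%N.
Proof.
elim/big_ind2: _ => [|m A k B leAm leBk|//]; first by rewrite cards0.
by rewrite (leq_trans (leq_card_setU A B)) ?leq_add.
Qed.

Lemma card_supsets (T : finType) (A : {set T}) k : (#|A| <= k)%N ->
  #|[set S : {set T} | A \subset S & #|S| == k]| = 'C(#|T| - #|A|, k - #|A|).
Proof.
move=> leAk; have cardAC : #|~: A| = (#|T| - #|A|)%N by rewrite cardsCs setCK.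
rewrite -cardAC -cards_draws.
have -> : [set S : {set T} | A \subset S & #|S| == k] =
          [set B :|: A | B in [set B : {set T} | B \subset ~: A & #|B| == k - #|A|]].
  apply/setP => S; rewrite inE; apply/andP/imsetP => [[sAS /eqP cS]|[B]].
    exists (S :\: A); first by rewrite inE subsetDr cardsDS // cS eqxx.
    by rewrite setUC -{1}(setIidPr sAS) setID.
  rewrite inE -disjoints_subset => /andP[dBA /eqP cB] ->.
  by rewrite subsetUr cardsU (disjoint_setI0 dBA) cards0 subn0 cB subnK.
rewrite card_in_imset // => B1 B2; rewrite !inE -!disjoints_subset.
move=> /andP[d1 _] /andP[d2 _] /(congr1 (fun S => S :\: A)).
by rewrite !setDUl setDv !setU0 (setDidPl d1) (setDidPl d2).
Qed.

Lemma card_adm_ge n r (F : seq {set 'I_n}) v : (1 <= r)%N ->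
  (forall f, f \in F -> v \in f) -> ('C(n - 1, r - 1) <= #|adm n r F| + size F)%N.
Proof.
move=> r_gt0 vF.
rewrite -{1}(card_ord n) -(cards1 v) -card_supsets ?cards1 //.
apply: leq_trans (leq_add (leqnn _) (card_size F)).
rewrite -[#|F|]cardsE; apply: leq_trans (leq_card_setU _ _); apply: subset_leq_card.
apply/subsetP => S; rewrite !inE sub1set => /andP[vS cS].
have [_|_] := boolP (S \in F); first by rewrite orbT.
rewrite cS orbF /=.
by apply/allP => f /vF vf; apply/set0Pn; exists v; rewrite inE vS.
Qed.

Lemma card_eventC_le n k (e1 e2 : {set 'I_n}) v : (2 <= k)%N ->
  #|e1| = k -> #|e2| = k -> e1 :&: e2 = [set v] ->
  (#|[set e3 : {set 'I_n} | (#|e3| == k) && eventC e1 e2 e3]|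
     <= 2 * (k - 1) * 'C(n - 2, k - 2))%N.
Proof.
move=> k_ge2 c1 c2 e12.
set D := (e1 :\: e2) :|: (e2 :\: e1).
have cardD : (#|D| <= 2 * (k - 1))%N.
  rewrite (leq_trans (leq_card_setU _ _)) // !cardsD [e2 :&: e1]setIC e12 cards1 c1 c2.
  lia.
have /setIP[v1 v2] : v \in e1 :&: e2 by rewrite e12 set11.
have vD : v \notin D by rewrite !inE v1 v2.
apply: (@leq_trans #|\bigcup_(u in D) [set S : {set 'I_n} | [set u; v] \subset S & #|S| == k]|).
  apply/subset_leq_card/subsetP => S; rewrite inE /eventC e12 sub1set.
  case/and3P=> cS vS /set0Pn[u]; rewrite inE => /andP[uS uD].
  by apply/bigcupP; exists u; rewrite // inE subUset !sub1set uS vS.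
apply: leq_trans (leq_card_bigcup _ _ _ _) _.
rewrite (eq_bigr (fun=> 'C(n - 2, k - 2))) => [|u uD]; last first.
  have uv : u != v by apply: contraNneq vD => <-.
  by rewrite card_supsets cards2 uv ?card_ord.
by rewrite sum_nat_const leq_mul2r cardD orbT.
Qed.

Lemma leq_bin_ratio n k c a : (2 <= k)%N -> (4 * k ^ 2 <= n)%N ->
  (c <= 2 * (k - 1) * 'C(n - 2, k - 2))%N -> ('C(n - 1, k - 1) <= a + 2)%N ->
  (c * n <= 4 * k ^ 2 * a)%N.
Proof.
move=> k_ge2 kn le_c le_bin.
have diag : ((n - 1) * 'C(n - 2, k - 2) = (k - 1) * 'C(n - 1, k - 1))%N.
  by have := mul_bin_diag (n - 1) (k - 2); rewrite -subn1 -subnDA subnSK.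
have X_gt0 : (0 < 'C(n - 2, k - 2))%N by rewrite bin_gt0; nia.
(* With X = C(n-2, k-2) >= 1 and 4 k <= n:
   n X <= 2 (n + 1 - 2 k) X <= 2 ((n - 1) X - 2 (k - 1)) = 2 (k - 1) (C(n-1, k-1) - 2). *)
have nX : (n * 'C(n - 2, k - 2) <= 2 * (k - 1) * a)%N by nia.
nia.
Qed.

Local Open Scope ring_scope.

Lemma ler_div_of_le_mul (R : numFieldType) (a b c : R) :
  0 <= c -> 0 <= b -> a <= c * b -> a / b <= c.
Proof.
move=> c_ge0; rewrite le0r => /predU1P[-> | b_gt0]; last by rewrite ler_pdivrMr.
by move=> _; rewrite invr0 mulr0.
Qed.

Lemma PrC_given_pair_le n k (e1 e2 : {set 'I_n}) v (eps : rat) :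
  (2 <= k)%N -> (4 * k ^ 2 <= n)%N -> (4 * k ^ 2)%:R <= eps * n%:R ->
  #|e1| = k -> #|e2| = k -> e1 :&: e2 = [set v] ->
  \sum_(e3 in adm n k [:: e1; e2] | eventC e1 e2 e3) pstep n k [:: e1; e2] <= eps.
Proof.
move=> k_ge2 kn kn_eps c1 c2 e12.
have /setIP[v1 v2] : v \in e1 :&: e2 by rewrite e12 set11.
set C := [set e3 in adm n k [:: e1; e2] | eventC e1 e2 e3].
set a := #|adm n k [:: e1; e2]|.
have n_gt0 : 0 < n%:R :> rat by rewrite ltr0n; nia.
have eps_gt0 : 0 < eps.
  by rewrite -(pmulr_lgt0 _ n_gt0) (lt_le_trans _ kn_eps) // ltr0n; nia.
have le_C : (#|C| <= 2 * (k - 1) * 'C(n - 2, k - 2))%N.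
  apply: leq_trans _ (card_eventC_le _ _ _ _ _ k_ge2 c1 c2 e12).
  by apply/subset_leq_card/subsetP => e3; rewrite !inE => /andP[/and3P[-> _ _] ->].
have ge_adm : ('C(n - 1, k - 1) <= a + 2)%N.
  by apply: (card_adm_ge _ _ _ v); [nia | move=> f; rewrite !inE => /pred2P[]->].
have Cn_le := leq_bin_ratio _ _ _ _ k_ge2 kn le_C ge_adm.
rewrite (eq_bigl (mem C)) => [|e3]; last by rewrite !inE.
rewrite sumr_const -mulr_natr mulrC; apply: ler_div_of_le_mul; [exact: ltW | exact: ler0n |].
rewrite -(ler_pM2r n_gt0) -natrM (le_trans (_ : _ <= (4 * k ^ 2 * a)%:R)) ?ler_nat //.
by rewrite natrM mulrAC ler_wpM2r.
Qed.

Theorem lemma4 (r : nat -> nat)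
  (hr2 : forall n : nat, (2 <= r n)%N)
  (hro : forall eps : rat, 0 < eps ->
           exists N : nat, forall n : nat, (N <= n)%N ->
             ((r n) ^ 2)%:R <= eps * n%:R) :
  forall eps : rat, 0 < eps ->
    exists N : nat, forall n : nat, (N <= n)%N ->
      PrC_given_A2 n (r n) <= eps.
Proof.
move=> eps eps_gt0.
have [N1 hN1] := hro (eps / 4) ltac:(by rewrite divr_gt0).
have [N2 hN2] := hro (1 / 4) ltac:(by []).
exists (maxn N1 N2) => n; rewrite geq_max => /andP[/hN1 rn_eps /hN2 rn].
have kn : (4 * r n ^ 2 <= n)%N by rewrite -(ler_nat rat) natrM; move: rn; lra.
have kn_eps : (4 * r n ^ 2)%:R <= eps * n%:R by rewrite natrM; move: rn_eps; lra.
have pstep_ge0 F : 0 <= pstep n (r n) F by rewrite invr_ge0.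
have PrA2_ge0 : 0 <= PrA2 n (r n).
  by do 2![apply: sumr_ge0 => ? _]; apply: mulr_ge0.
apply: ler_div_of_le_mul; [exact: ltW | exact: PrA2_ge0 |].
rewrite /PrCA2 /PrA2 mulr_sumr; apply: ler_sum => e1; rewrite inE => /and3P[/eqP c1 _ _].
rewrite mulr_sumr; apply: ler_sum => e2 /andP[]; rewrite inE => /and3P[/eqP c2 _ _].
move=> /cards1P[v e12]; rewrite -mulr_sumr mulrC ler_wpM2r ?mulr_ge0 //.
exact: PrC_given_pair_le _ _ _ _ _ _ (hr2 n) kn kn_eps c1 c2 e12.
Qed.
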